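(* Let $0<t<1$ and $\alpha>0$. Define $H^{t}:\mathbb{R}\to\mathbb{R}$ by $H^{t}(p)=0$ if $p=0$, $H^{t}(p)=t$ if $0<|p|\le 1$, and $H^{t}(p)=1$ if $|p|>1$. Let $x\in\mathbb{R}$ with $|x|\ge 1$, and consider the function $E(p)=(x-p)^{2}+\alpha H^{t}(p)$ of $p\in\mathbb{R}$. Then $E$ attains its global minimum over $p\in\mathbb{R}$ at $$p=\begin{cases}0 & \text{if } |x|\le \min\!\left(\frac{1+\alpha t}{2},\sqrt{\alpha}\right),\\ \operatorname{sgn}(x) & \text{if } \frac{1+\alpha t}{2}<|x|\le 1+\sqrt{\alpha(1-t)},\\ x & \text{if } |x|>\max\!\left(1+\sqrt{\alpha(1-t)},\sqrt{\alpha}\right).\end{cases}$$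
   Context: $\operatorname{sgn}(x)$ denotes the sign of $x$ ($1$ if $x>0$, $-1$ if $x<0$). The function $H^{t}$ is the per-entry penalty of the ''$l_0^t$ measure'', which counts entries of absolute value greater than $1$ with weight $1$ and nonzero entries of absolute value at most $1$ with weight $t$. *)

From Stdlib Require Import Reals Lra.
Open Scope R_scope.

Definition Ht (t p : R) : R :=
  if Req_EM_T p 0 then 0 else if Rle_dec (Rabs p) 1 then t else 1.

(* Sign function: 1 if x > 0, -1 if x < 0 (value at 0 is irrelevant here,
   since it is only used for |x| >= 1; we set it to 0). *)
Definition sgn (x : R) : R :=
  if Rlt_dec 0 x then 1 else if Rlt_dec x 0 then -1 else 0.

Definition Eng (t alpha x p : R) : R := (x - p) ^ 2 + alpha * Ht t p.

(** It suffices to compare three candidates: [p = 0] (energy [x^2]), the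
    closest point [sgn x] of the band [0 < |p| <= 1] (energy
    [(|x| - 1)^2 + alpha t]), and [p = x] itself (energy [alpha]), and every
    [p] has energy at least the smallest of these three.  In each regime of
    the theorem the corresponding candidate is the smallest: the thresholds
    are [x^2 <= (|x| - 1)^2 + alpha t <-> 2|x| - 1 <= alpha t],
    [(|x| - 1)^2 + alpha t <= alpha <-> |x| - 1 <= sqrt (alpha (1 - t))] and
    [x^2 <= alpha <-> |x| <= sqrt alpha]. *)

From Stdlib Require Import Reals Lra.
Open Scope R_scope.

Lemma pow2_le_of_le_sqrt (a b : R) : 0 <= a -> 0 <= b -> a <= sqrt b -> a ^ 2 <= b.
Proof. intros ha hb hab; pose proof (sqrt_sqrt b hb); nra. Qed.

Lemma pow2_gt_of_sqrt_lt (a b : R) : 0 <= b -> sqrt b < a -> b < a ^ 2.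
Proof. intros hb hab; pose proof (sqrt_sqrt b hb); pose proof (sqrt_pos b); nra. Qed.

Lemma Ht_0 (t : R) : Ht t 0 = 0.
Proof. unfold Ht; destruct (Req_EM_T 0 0); [reflexivity | lra]. Qed.

Lemma Ht_small (t p : R) : p <> 0 -> Rabs p <= 1 -> Ht t p = t.
Proof.
  intros hp hp1; unfold Ht.
  destruct (Req_EM_T p 0); [contradiction|].
  destruct (Rle_dec (Rabs p) 1); [reflexivity | contradiction].
Qed.

Lemma Ht_large (t p : R) : 1 < Rabs p -> Ht t p = 1.
Proof.
  intros hp; unfold Ht.
  destruct (Req_EM_T p 0) as [e|_].
  - rewrite e, Rabs_R0 in hp; lra.
  - destruct (Rle_dec (Rabs p) 1); [lra | reflexivity].
Qed.

Lemma sgn_cases (x : R) : 1 <= Rabs x ->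
  (0 < x /\ sgn x = 1) \/ (x < 0 /\ sgn x = -1).
Proof.
  intros hx; unfold sgn.
  destruct (Rlt_dec 0 x); [left; split; [assumption | reflexivity]|].
  destruct (Rlt_dec x 0); [right; split; [assumption | reflexivity]|].
  replace x with 0 in hx by lra; rewrite Rabs_R0 in hx; lra.
Qed.

Lemma Rabs_sub_sgn (x : R) : 1 <= Rabs x -> Rabs (x - sgn x) = Rabs x - 1.
Proof.
  intros hx.
  destruct (sgn_cases x hx) as [[hpos ->] | [hneg ->]].
  - rewrite (Rabs_right x) in * by lra.
    apply Rabs_right; lra.
  - rewrite (Rabs_left x) in * by lra.
    rewrite Rabs_left1; lra.
Qed.

Lemma Rabs_sgn (x : R) : 1 <= Rabs x -> Rabs (sgn x) = 1.
Proof.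
  intros hx; destruct (sgn_cases x hx) as [[_ ->] | [_ ->]].
  - apply Rabs_R1.
  - rewrite Rabs_left; lra.
Qed.

Lemma Eng_0 (t alpha x : R) : Eng t alpha x 0 = x ^ 2.
Proof. unfold Eng; rewrite Ht_0; ring. Qed.

Lemma Eng_sgn (t alpha x : R) : 1 <= Rabs x ->
  Eng t alpha x (sgn x) = (Rabs x - 1) ^ 2 + alpha * t.
Proof.
  intros hx; unfold Eng.
  pose proof (Rabs_sgn x hx) as hs.
  assert (hs0 : sgn x <> 0) by (intros e; rewrite e, Rabs_R0 in hs; lra).
  rewrite <- pow2_abs, Rabs_sub_sgn, Ht_small by lra.
  reflexivity.
Qed.

Lemma Eng_self (t alpha x : R) : 1 < Rabs x -> Eng t alpha x x = alpha.
Proof. intros hx; unfold Eng; rewrite Ht_large by assumption; ring. Qed.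

Lemma pow2_sub_ge_of_Rabs_le_1 (x p : R) : 1 <= Rabs x -> Rabs p <= 1 ->
  (Rabs x - 1) ^ 2 <= (x - p) ^ 2.
Proof.
  intros hx hp; rewrite <- (pow2_abs (x - p)).
  pose proof (Rabs_triang_inv x p); nra.
Qed.

Lemma Eng_ge_of_le_candidates (t alpha x e : R) : 1 <= Rabs x ->
  e <= x ^ 2 -> e <= (Rabs x - 1) ^ 2 + alpha * t -> e <= alpha ->
  forall p, e <= Eng t alpha x p.
Proof.
  intros hx h0 hsgn hself p.
  destruct (Req_EM_T p 0) as [-> | hp0].
  - rewrite Eng_0; assumption.
  - unfold Eng; destruct (Rle_dec (Rabs p) 1) as [hp1 | hp1].
    + rewrite Ht_small by assumption.
      pose proof (pow2_sub_ge_of_Rabs_le_1 x p hx hp1); lra.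
    + rewrite Ht_large by lra.
      pose proof (pow2_ge_0 (x - p)); lra.
Qed.

Theorem theorem3p1 (t alpha x : R) (ht0 : 0 < t) (ht1 : t < 1)
  (halpha : 0 < alpha) (hx : 1 <= Rabs x) :
  (Rabs x <= Rmin ((1 + alpha * t) / 2) (sqrt alpha) ->
     forall p : R, Eng t alpha x 0 <= Eng t alpha x p) /\
  ((1 + alpha * t) / 2 < Rabs x <= 1 + sqrt (alpha * (1 - t)) ->
     forall p : R, Eng t alpha x (sgn x) <= Eng t alpha x p) /\
  (Rmax (1 + sqrt (alpha * (1 - t))) (sqrt alpha) < Rabs x ->
     forall p : R, Eng t alpha x x <= Eng t alpha x p).
Proof.
  pose proof (Eng_ge_of_le_candidates t alpha x) as hmin.
  assert (hx2 : x ^ 2 = Rabs x ^ 2) by (symmetry; apply pow2_abs).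
  assert (hb : 0 <= alpha * (1 - t)) by nra.
  split; [|split].
  - intros hxmin.
    pose proof (Rle_trans _ _ _ hxmin (Rmin_l _ _)) as hxt.
    pose proof (Rle_trans _ _ _ hxmin (Rmin_r _ _)) as hxa.
    rewrite Eng_0; apply (hmin _ hx).
    + lra.
    + nra.
    + apply pow2_le_of_le_sqrt in hxa; lra.
  - intros [hxt hxb].
    rewrite Eng_sgn by assumption.
    apply (hmin _ hx).
    + nra.
    + lra.
    + assert ((Rabs x - 1) ^ 2 <= alpha * (1 - t))
        by (apply pow2_le_of_le_sqrt; lra).
      lra.
  - intros [hxb hxa]%Rmax_Rlt.
    pose proof (sqrt_pos (alpha * (1 - t))).
    rewrite Eng_self by lra.
    apply (hmin _ hx).
    + apply pow2_gt_of_sqrt_lt in hxa; lra.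
    + assert (alpha * (1 - t) < (Rabs x - 1) ^ 2)
        by (apply pow2_gt_of_sqrt_lt; lra).
      lra.
    + lra.
Qed.
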